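(* For any complex numbers $a,b$ and any natural number $n\ge1$, \[ \Psi(a,b,n)=\sum_{i=0}^{\lfloor n/2\rfloor}\frac{n}{n-i}\binom{n-i}{i}(-a)^i(2a-b)^{\lfloor n/2\rfloor-i},\qquad \Phi(a,b,n)=\sum_{i=0}^{\lfloor (n-1)/2\rfloor}\binom{n-i-1}{i}(-a)^i(2a-b)^{\lfloor (n-1)/2\rfloor-i}. \]
   Context: $\delta(m)=1$ for $m$ odd and $0$ for $m$ even; $\lfloor\cdot\rfloor$ is the floor. $\Psi(a,b,n)$, $\Phi(a,b,n)$ are defined by $\Psi(a,b,0)=2$, $\Psi(a,b,1)=1$, $\Psi(a,b,n+1)=(2a-b)^{\delta(n)}\Psi(a,b,n)-a\Psi(a,b,n-1)$ and $\Phi(a,b,0)=0$, $\Phi(a,b,1)=1$, $\Phi(a,b,n+1)=(2a-b)^{\delta(n+1)}\Phi(a,b,n)-a\Phi(a,b,n-1)$ for $n\ge1$. *)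

From HB Require Import structures.
From mathcomp Require Import all_boot all_order all_algebra.
From mathcomp Require Import complex.
From mathcomp Require Import Rstruct.
From Stdlib Require Import Rdefinitions.
Set Implicit Arguments. Unset Strict Implicit. Unset Printing Implicit Defensive.
Import Order.TTheory GRing.Theory Num.Theory.
Local Open Scope ring_scope.

Notation CC := (complex R).

Definition delta (m : nat) : nat := odd m.

Fixpoint Psi (a b : CC) (n : nat) {struct n} : CC :=
  match n with
  | 0 => 2
  | 1 => 1
  | (m.+1 as k).+1 => (2 * a - b) ^+ delta k * Psi a b k - a * Psi a b m
  end.

Fixpoint Phi (a b : CC) (n : nat) {struct n} : CC :=
  match n with
  | 0 => 0
  | 1 => 1
  | (m.+1 as k).+1 => (2 * a - b) ^+ delta k.+1 * Phi a b k - a * Phi a b m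
  end.

(** Both sides of the [Phi] identity satisfy the same two-step recurrence:
    for the sum this is Pascal's rule, the factor [(2a-b)^(delta n)]
    accounting for the floors.  [Psi(n+1) = Phi(n+2) - a Phi(n)] since both
    sides satisfy the [Psi] recurrence, and the [Psi] sum is read off from
    [n/(n-i) C(n-i,i) = C(n-i,i) + C(n-i-1,i-1)]. *)

From HB Require Import structures.
From mathcomp Require Import all_boot all_order all_algebra.
From mathcomp Require Import complex Rstruct.
From mathcomp Require Import ring zify.
Import Order.TTheory GRing.Theory Num.Theory.
Local Open Scope ring_scope.

Lemma mul_bin_lucas m i :
  ((m + i.+1) * 'C(m, i.+1) = m * ('C(m, i.+1) + 'C(m.-1, i)))%N.
Proof. by rewrite mulnDr mul_bin_diag mulnDl. Qed.

Lemma bin_sub_pascal k i :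
  'C(k.+1 - i, i.+1) = ('C(k - i, i.+1) + 'C(k - i, i))%N.
Proof.
have [le_ik|lt_ki] := leqP i k; first by rewrite subSn // binS.
by rewrite !bin_small //; lia.
Qed.

Section PhiSum.
Variables (R : comPzRingType) (x c : R).

Definition phi_sum k :=
  \sum_(0 <= i < (k %/ 2).+1) 'C(k - i, i)%:R * x ^+ i * c ^+ (k %/ 2 - i).

Lemma phi_sum_widen k N : (k %/ 2 < N)%N ->
  \sum_(0 <= i < N) 'C(k - i, i)%:R * x ^+ i * c ^+ (k %/ 2 - i) = phi_sum k.
Proof.
move=> lt_kN; rewrite (big_cat_nat _ (n := (k %/ 2).+1)) //=.
rewrite [X in _ + X]big1_seq ?addr0 // => i /andP[_].
by rewrite mem_index_iota => /andP[le_ki _]; rewrite bin_small ?mul0r //; lia.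
Qed.

Lemma phi_sumSS k :
  phi_sum k.+2 = c ^+ (~~ odd k) * phi_sum k.+1 + x * phi_sum k.
Proof.
have k_eq : k = (k %/ 2 * 2 + odd k)%N by rewrite -modn2 -divn_eq.
have half_kSS : (k.+2 %/ 2 = (k %/ 2).+1)%N by lia.
rewrite -(@phi_sum_widen k.+1 (k %/ 2).+2); last by case: (odd k) k_eq; lia.
rewrite /phi_sum half_kSS big_nat_recl // [in X in _ = _ * X + _]big_nat_recl //.
rewrite mulrDr -addrA; congr (_ + _).
  rewrite !subn0 !bin0 !mul1r -exprD; congr (_ ^+ _).
  by case: (odd k) k_eq; lia.
rewrite !mulr_sumr -big_split /=; apply: eq_bigr => i _.
rewrite subSS bin_sub_pascal natrD !mulrDl; congr (_ + _); last first.
  by rewrite exprS; ring.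
have [le_ik|lt_ki] := leqP i.+1 (k - i); last first.
  by rewrite bin_small // !mul0r mulr0.
have -> : c ^+ (k %/ 2 - i) = c ^+ (~~ odd k) * c ^+ (k.+1 %/ 2 - i.+1).
  by rewrite -exprD; congr (_ ^+ _); case: (odd k) k_eq; lia.
ring.
Qed.

End PhiSum.
Arguments phi_sum {R} x c k.

Section PsiSum.
Variables (R : numFieldType) (x c : R).

Definition psi_sum n :=
  \sum_(0 <= i < (n %/ 2).+1)
     n%:R / (n - i)%:R * 'C(n - i, i)%:R * x ^+ i * c ^+ (n %/ 2 - i).

Lemma psi_sum_phi_sum m : psi_sum m.+2 = phi_sum x c m.+2 + x * phi_sum x c m.
Proof.
rewrite /psi_sum /phi_sum; set q := (m %/ 2)%N.
have half_mSS : (m.+2 %/ 2 = q.+1)%N by rewrite /q; lia.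
rewrite half_mSS big_nat_recl // [in X in _ = X + _]big_nat_recl //.
rewrite mulr_sumr -addrA -big_split /=.
congr (_ + _).
  by rewrite !subn0 !bin0 divff ?mul1r // pnatr_eq0.
apply: eq_big_nat => i /andP[_ lt_iq].
have nz_mi : ((m.+2 - i.+1)%:R : R) != 0 by rewrite pnatr_eq0 /q in lt_iq *; lia.
have lucas : m.+2%:R / (m.+2 - i.+1)%:R * 'C(m.+2 - i.+1, i.+1)%:R
    = 'C(m.+2 - i.+1, i.+1)%:R + 'C(m - i, i)%:R :> R.
  apply: (mulIf nz_mi); rewrite mulrAC divfK // -natrD -!natrM; congr _%:R.
  have le_im : (i <= m)%N by rewrite /q in lt_iq; lia.
  rewrite subSS subSn // (_ : m.+2 = (m - i).+1 + i.+1)%N; last by lia.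
  by rewrite mul_bin_lucas mulnC.
by rewrite lucas subSS -/q exprS; ring.
Qed.

End PsiSum.

Section PsiPhi.
Variables a b : CC.

Lemma PhiSS n :
  Phi a b n.+2 = (2 * a - b) ^+ delta n.+2 * Phi a b n.+1 - a * Phi a b n.
Proof. by []. Qed.

Lemma PsiSS n :
  Psi a b n.+2 = (2 * a - b) ^+ delta n.+1 * Psi a b n.+1 - a * Psi a b n.
Proof. by []. Qed.

Lemma Phi_phi_sum k : Phi a b k.+1 = phi_sum (- a) (2 * a - b) k.
Proof.
suff : Phi a b k.+1 = phi_sum (- a) (2 * a - b) k /\
       Phi a b k.+2 = phi_sum (- a) (2 * a - b) k.+1 by case.
elim: k => [|k [IHk IHkS]].
  by rewrite /phi_sum !big_nat1 /= /delta /= !mul1r mulr0 subr0.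
by split=> //; rewrite PhiSS phi_sumSS -IHk -IHkS /delta /= negbK mulNr.
Qed.

Lemma Psi_Phi n : Psi a b n.+1 = Phi a b n.+2 - a * Phi a b n.
Proof.
suff : Psi a b n.+1 = Phi a b n.+2 - a * Phi a b n /\
       Psi a b n.+2 = Phi a b n.+3 - a * Phi a b n.+1 by case.
elim: n => [|n [IHn IHnS]]; first by split; rewrite /= /delta /=; ring.
by split=> //; rewrite PsiSS IHn IHnS !PhiSS /delta /= !negbK; ring.
Qed.

End PsiPhi.

Theorem theorem5p2 (a b : CC) (n : nat) (hn : (1 <= n)%N) :
  Psi a b n =
    \sum_(0 <= i < (n %/ 2).+1)
       (n%:R / (n - i)%:R) * 'C(n - i, i)%:R * (- a) ^+ i
         * (2 * a - b) ^+ (n %/ 2 - i)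
  /\
  Phi a b n =
    \sum_(0 <= i < (n.-1 %/ 2).+1)
       'C(n - i - 1, i)%:R * (- a) ^+ i * (2 * a - b) ^+ (n.-1 %/ 2 - i).
Proof.
case: n hn => // k _; split.
  case: k => [|m]; first by rewrite big_nat1 /= divr1 !mul1r.
  by rewrite Psi_Phi !Phi_phi_sum -mulNr -psi_sum_phi_sum.
rewrite Phi_phi_sum; apply: eq_bigr => i _.
by rewrite subnAC subSS subn0.
Qed.
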